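(* Let $u^{(1)},\ldots,u^{(k)}\in(\mathbb{N}\cup\{0\})^m$ and put $M:=\bigcup_{j=1}^k\{x\in\mathbb{R}^m:0\leq x\leq u^{(j)}\}$ (entrywise order). Then $M\cap\mathbb{Z}^m$ is the unique subset $C\subseteq M$ with $|C|=|M\cap\mathbb{Z}^m|$ whose minimum distance $\min\{\|x-y\|_\infty:x,y\in C,x\neq y\}$ equals $1$. *)

From HB Require Import structures.
From mathcomp Require Import all_boot all_order all_algebra.
From mathcomp Require Import boolp classical_sets cardinality reals.
Set Implicit Arguments. Unset Strict Implicit. Unset Printing Implicit Defensive.
Import Order.TTheory GRing.Theory Num.Theory.
Local Open Scope ring_scope.
Local Open Scope classical_set_scope.

(* Points of R^m are row vectors 'rV[R]_m; coordinate i of x is x ord0 i. *)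

Definition supnorm (R : realType) (m : nat) (x : 'rV[R]_m) : R :=
  \big[Num.max/0]_(i < m) `|x ord0 i|.

Definition box_union (R : realType) (m k : nat) (u : 'I_k -> 'I_m -> nat)
  : set 'rV[R]_m :=
  [set x | exists j : 'I_k, forall i : 'I_m, 0 <= x ord0 i <= (u j i)%:R].

Definition intpts (R : realType) (m : nat) : set 'rV[R]_m :=
  [set x | forall i : 'I_m, exists z : int, x ord0 i = z%:~R].

Definition min_dist_eq1 (R : realType) (m : nat) (C : set 'rV[R]_m) : Prop :=
  (forall x y, C x -> C y -> x <> y -> 1 <= supnorm (x - y)) /\
  (exists x y, [/\ C x, C y, x <> y & supnorm (x - y) = 1]).

(* Distinct lattice points are at sup-distance at least 1, and 0 and a unit
   vector are at distance exactly 1.  Conversely, let C be a 1-separated subset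
   of M with as many points as the lattice part Z of M.  Coordinatewise floor
   and ceiling map M into Z, and on a 1-separated set they are injective, so
   both are bijections from C onto Z.  Summing the i-th coordinate over C
   therefore gives the same value for floor and ceiling; as floor <= ceiling
   pointwise, they agree on C, which forces every point of C to be a lattice
   point. *)
From HB Require Import structures.
From mathcomp Require Import all_boot all_order all_algebra finmap.
From mathcomp Require Import boolp classical_sets cardinality fsbigop reals.
From mathcomp Require Import lra.
Import Order.TTheory GRing.Theory Num.Theory.
Local Open Scope ring_scope.
Local Open Scope classical_set_scope.

Lemma inj_image_eq (T U : choiceType) (A : set T) (B : set U) (f : T -> U) :
  finite_set B -> (A #= B)%card -> {in A &, injective f} -> f @` A `<=` B ->
  f @` A = B.
Proof.
move=> finB AB injf fAB.
have finfA : finite_set (f @` A).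
  by apply: finite_image; rewrite (eq_finite_set AB).
have fA_B : (f @` A #= B)%card by apply: card_eq_trans AB; exact: inj_card_eq.
have cardE : #|` fset_set (f @` A)| = #|` fset_set B| by apply/fcard_eq.
apply: fset_set_inj => //; apply/fsetP; apply/(fsubset_cardP cardE).
by rewrite -fset_set_sub.
Qed.

Lemma eq_on_same_image (R : realDomainType) (T U : choiceType) (A : set T)
    (f g : T -> U) (w : U -> R) :
  finite_set A -> {in A &, injective f} -> {in A &, injective g} ->
  f @` A = g @` A -> (forall x, A x -> w (f x) <= w (g x)) ->
  forall x, A x -> w (f x) = w (g x).
Proof.
move=> finA injf injg fAgA wfg x Ax; apply/eqP; rewrite eq_sym -subr_eq0; apply/eqP.
apply: (pfsumr_eq0 (F := fun x => w (g x) - w (f x)) finA) x Ax => [y Ay|].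
  by rewrite subr_ge0 wfg.
have sum_image (h : T -> U) : {in A &, injective h} ->
    \sum_(x \in A) w (h x) = \sum_(y \in h @` A) w y.
  by move=> injh; rewrite fsbig_image.
rewrite !fsbig_finite //= sumrB -!fsbig_finite //.
by rewrite !sum_image // fAgA subrr.
Qed.

Lemma floor_eq_dist_lt1 (R : archiRealFieldType) (a b : R) :
  Num.floor a = Num.floor b -> `|a - b| < 1.
Proof.
move=> fab; have := floor_itv a; have := floor_itv b.
rewrite !intrD fab => /andP[? ?] /andP[? ?]; rewrite ltr_norml; apply/andP; split; lra.
Qed.

Lemma ceil_eq_dist_lt1 (R : archiRealFieldType) (a b : R) :
  Num.ceil a = Num.ceil b -> `|a - b| < 1.
Proof.
move=> cab; have := ceil_itv a; have := ceil_itv b.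
rewrite !intrB cab => /andP[? ?] /andP[? ?]; rewrite ltr_norml; apply/andP; split; lra.
Qed.

Section Supnorm.
Context {R : realType} {m : nat}.
Implicit Types (x y v : 'rV[R]_m) (C : set 'rV[R]_m).

Lemma le_supnorm v i : `|v ord0 i| <= supnorm v.
Proof. exact: le_bigmax. Qed.

Lemma supnorm_le v c : 0 <= c -> (forall i, `|v ord0 i| <= c) -> supnorm v <= c.
Proof. by move=> c0 vc; apply: bigmax_le => // i _; exact: vc. Qed.

Lemma supnorm_lt v c : 0 < c -> (forall i, `|v ord0 i| < c) -> supnorm v < c.
Proof. by move=> c0 vc; apply: bigmax_lt => // i _; exact: vc. Qed.

Definition separated C :=
  forall x y, C x -> C y -> x <> y -> 1 <= supnorm (x - y).

Lemma separated_inj C (f : 'rV[R]_m -> 'rV[R]_m) :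
  (forall x y i, f x ord0 i = f y ord0 i -> `|x ord0 i - y ord0 i| < 1) ->
  separated C -> {in C &, injective f}.
Proof.
move=> near_f sepC x y; rewrite !in_setE => Cx Cy fxy; apply: contrapT => nxy.
have := sepC x y Cx Cy nxy; apply/negP; rewrite -ltNge.
by apply: supnorm_lt => // i; rewrite !mxE; apply: near_f; rewrite fxy.
Qed.

Lemma separated_intpts : separated (@intpts R m).
Proof.
move=> x y Ix Iy xy; have /existsP[i xy_i] : [exists i, x ord0 i != y ord0 i].
  rewrite -negb_forall; apply: contra_notN xy => /forallP xyE.
  by apply/rowP => i; exact/eqP.
apply: le_trans (le_supnorm _ i); rewrite !mxE.
move: xy_i; have [[a ->] [b ->]] := (Ix i, Iy i).
by rewrite -intrB -intr_norm ler1z -gtz0_ge1 normr_gt0 subr_eq0 eqr_int.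
Qed.

Lemma separatedS C C' : C `<=` C' -> separated C' -> separated C.
Proof. by move=> CC' sepC' x y Cx Cy; apply: sepC'; apply: CC'. Qed.

Definition row_floor v : 'rV[R]_m := map_mx (fun a => (Num.floor a)%:~R) v.
Definition row_ceil v : 'rV[R]_m := map_mx (fun a => (Num.ceil a)%:~R) v.

Lemma row_floor_inj C : separated C -> {in C &, injective row_floor}.
Proof.
by apply: separated_inj => x y i; rewrite !mxE => /intr_inj; exact: floor_eq_dist_lt1.
Qed.

Lemma row_ceil_inj C : separated C -> {in C &, injective row_ceil}.
Proof.
by apply: separated_inj => x y i; rewrite !mxE => /intr_inj; exact: ceil_eq_dist_lt1.
Qed.

Lemma row_floor_le v i : row_floor v ord0 i <= v ord0 i.
Proof. by rewrite mxE floor_le. Qed.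

Lemma row_ceil_ge v i : v ord0 i <= row_ceil v ord0 i.
Proof. by rewrite mxE ceil_ge. Qed.

Lemma intpts_row_floor v : intpts (row_floor v).
Proof. by move=> i; exists (Num.floor (v ord0 i)); rewrite mxE. Qed.

Lemma intpts_row_ceil v : intpts (row_ceil v).
Proof. by move=> i; exists (Num.ceil (v ord0 i)); rewrite mxE. Qed.

End Supnorm.

Section BoxUnion.
Variables (R : realType) (m k : nat) (u : 'I_k -> 'I_m -> nat).
Local Notation M := (@box_union R m k u).
Local Notation Z := (M `&` @intpts R m).

Lemma box_union_row_floor x : M x -> M (row_floor x).
Proof.
case=> j xj; exists j => i; rewrite mxE; have /andP[x_ge0 x_le] := xj i.
by rewrite ler0z floor_ge0 x_ge0 (le_trans (floor_le _) x_le).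
Qed.

Lemma box_union_row_ceil x : M x -> M (row_ceil x).
Proof.
case=> j xj; exists j => i; rewrite mxE; have /andP[x_ge0 x_le] := xj i.
rewrite (le_trans x_ge0 (ceil_ge _)) /=.
by rewrite -[(u j i)%:R]/(((u j i)%:Z)%:~R) ler_int ceil_le_int.
Qed.

Lemma finite_box_union_intpts : finite_set Z.
Proof.
pose U := (\max_(j < k) \max_(i < m) u j i)%N.
pose g (f : {ffun 'I_m -> 'I_U.+1}) : 'rV[R]_m := \row_i (f i)%:R.
apply: sub_finite_set (finite_image g (@finite_finset _ setT)) => z [[j zj] Iz].
exists [ffun i => inord (absz (Num.floor (z ord0 i)))] => //.
apply/rowP => i; rewrite !mxE ffunE.
have [n zn] := Iz i; have /andP[] := zj i; rewrite zn.
case: n zn => [a|a] zn; rewrite ?ler0z // => _.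
rewrite -[(u j i)%:R]/(((u j i)%:Z)%:~R) ler_int lez_nat => a_le.
rewrite intrKfloor /= inordK // ltnS (leq_trans a_le) //.
apply: leq_trans (leq_bigmax (F := fun i => u j i) i) _.
exact: (leq_bigmax (F := fun j => \max_(i < m) u j i) j).
Qed.

Lemma box_union_intpts_dist1 : (exists j i, u j i <> 0%N) ->
  exists x y, [/\ Z x, Z y, x <> y & supnorm (x - y) = 1].
Proof.
move=> [j [i uji_neq0]].
pose e : 'rV[R]_m := \row_l (l == i)%:R.
have Ze : Z e.
  split=> [|l]; last by exists (l == i)%:Z; rewrite mxE.
  exists j => l; rewrite mxE; case: eqP => [->|_] /=.
    by rewrite ler01 ler1n lt0n; exact/eqP.
  by rewrite lexx ler0n.
have Z0 : Z 0.
  by split=> [|l]; [exists j => l; rewrite mxE lexx ler0n | exists 0; rewrite mxE].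
have e_i : e ord0 i = 1 by rewrite mxE eqxx.
exists e, 0; split=> //.
  by move/rowP/(_ i); rewrite e_i mxE; exact/eqP/oner_neq0.
apply/eqP; rewrite subr0 eq_le; apply/andP; split.
  by apply: supnorm_le => // l; rewrite mxE; case: (l == i); rewrite ?normr1 ?normr0.
by rewrite -{1}normr1 -e_i le_supnorm.
Qed.

End BoxUnion.

Theorem lemma4p2 (R : realType) (m k : nat) (u : 'I_k -> 'I_m -> nat)
  (hnz : exists (j : 'I_k) (i : 'I_m), u j i <> 0%N) :
  let M := @box_union R m k u in
  let Z := M `&` @intpts R m in
  min_dist_eq1 Z /\
  (forall C : set 'rV[R]_m, C `<=` M -> (C #= Z)%card -> min_dist_eq1 C -> C = Z).
Proof.
move=> M Z; have finZ : finite_set Z by exact: finite_box_union_intpts.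
split.
  split; last exact: box_union_intpts_dist1.
  by apply: separatedS separated_intpts; apply: subIsetr.
move=> C CM CZ [sepC _]; have finC : finite_set C by rewrite (eq_finite_set CZ).
have floorC : row_floor @` C = Z.
  apply: inj_image_eq => //; first exact: row_floor_inj.
  by move=> _ [x /CM Mx <-]; split; [exact: box_union_row_floor | exact: intpts_row_floor].
have ceilC : row_ceil @` C = Z.
  apply: inj_image_eq => //; first exact: row_ceil_inj.
  by move=> _ [x /CM Mx <-]; split; [exact: box_union_row_ceil | exact: intpts_row_ceil].
have floor_eq_ceil x i : C x -> row_floor x ord0 i = row_ceil x ord0 i.
  apply: (@eq_on_same_image _ _ _ C row_floor row_ceil (fun v => v ord0 i)) => //.
  - exact: row_floor_inj.
  - exact: row_ceil_inj.
  - by rewrite floorC ceilC.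
  - by move=> y _ /=; exact: le_trans (row_floor_le y i) (row_ceil_ge y i).
have floor_id x : C x -> row_floor x = x.
  move=> Cx; apply/rowP => i; apply/eqP.
  by rewrite eq_le row_floor_le floor_eq_ceil ?row_ceil_ge.
by rewrite -floorC (eq_imagel floor_id) image_id.
Qed.
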